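(* Let $R$ be a commutative ring with identity, $\mathcal S$ an associative $R$-algebra with identity and $\mathcal M$ a bimodule over $\mathcal S$. For $x\in\mathcal S$ let $T(x)=\{m\in\mathcal M: m(xa-ax)=0\text{ for all } a\in\mathcal S\}$. Then $T(x)$ is a subbimodule of $\mathcal M$. *)

From HB Require Import structures.
From mathcomp Require Import all_boot all_order all_algebra.
Set Implicit Arguments. Unset Strict Implicit. Unset Printing Implicit Defensive.
Import GRing.Theory.
Local Open Scope ring_scope.

Record bimodule (R : comPzRingType) (S : algType R) (M : lmodType R)
    (lmul : S -> M -> M) (rmul : M -> S -> M) : Prop := Bimodule {
  lmulDl : forall (s t : S) (m : M), lmul (s + t) m = lmul s m + lmul t m;
  lmulDr : forall (s : S) (m n : M), lmul s (m + n) = lmul s m + lmul s n;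
  lmulA  : forall (s t : S) (m : M), lmul (s * t) m = lmul s (lmul t m);
  lmul1  : forall m : M, lmul 1 m = m;
  rmulDl : forall (m n : M) (s : S), rmul (m + n) s = rmul m s + rmul n s;
  rmulDr : forall (m : M) (s t : S), rmul m (s + t) = rmul m s + rmul m t;
  rmulA  : forall (m : M) (s t : S), rmul m (s * t) = rmul (rmul m s) t;
  rmul1  : forall m : M, rmul m 1 = m;
  lrmulA : forall (s t : S) (m : M), rmul (lmul s m) t = lmul s (rmul m t);
  lmulZl : forall (r : R) (s : S) (m : M), lmul (r *: s) m = r *: lmul s m;
  lmulZr : forall (r : R) (s : S) (m : M), lmul s (r *: m) = r *: lmul s m;
  rmulZl : forall (r : R) (m : M) (s : S), rmul (r *: m) s = r *: rmul m s;
  rmulZr : forall (r : R) (m : M) (s : S), rmul m (r *: s) = r *: rmul m s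
}.

Definition subbimodule (R : comPzRingType) (S : algType R) (M : lmodType R)
    (lmul : S -> M -> M) (rmul : M -> S -> M) (N : M -> Prop) : Prop :=
  [/\ N 0,
      (forall m n, N m -> N n -> N (m + n)),
      (forall (r : R) m, N m -> N (r *: m)),
      (forall (s : S) m, N m -> N (lmul s m)) &
      (forall (s : S) m, N m -> N (rmul m s))].

Definition Tset (R : comPzRingType) (S : algType R) (M : lmodType R)
    (rmul : M -> S -> M) (x : S) : M -> Prop :=
  fun m => forall a : S, rmul m (x * a - a * x) = 0.

From mathcomp Require Import all_boot all_order all_algebra.
Local Open Scope ring_scope.
Import GRing.Theory.
Set Implicit Arguments. Unset Strict Implicit. Unset Printing Implicit Defensive.

(* The commutator [x, -] is a derivation, [x, s a] = [x, s] a + s [x, a]; so if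
   m kills every [x, b], then m s [x, a] = m [x, s a] - (m [x, s]) a = 0. *)

Lemma mulr_commBr (T : pzRingType) (x s a : T) :
  s * (x * a - a * x) = (x * (s * a) - s * a * x) - (x * s - s * x) * a.
Proof. by rewrite !mulrBr !mulrBl !mulrA opprB [RHS]addrC addrA subrK. Qed.

Section Bimodule.

Variables (R : comPzRingType) (S : algType R) (M : lmodType R).
Variables (lmul : S -> M -> M) (rmul : M -> S -> M).
Hypothesis hM : bimodule lmul rmul.

Lemma lmulr0 (s : S) : lmul s 0 = 0.
Proof. by apply: (addIr (lmul s 0)); rewrite add0r -(lmulDr hM) addr0. Qed.

Lemma rmul0r (s : S) : rmul 0 s = 0.
Proof. by apply: (addIr (rmul 0 s)); rewrite add0r -(rmulDl hM) addr0. Qed.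

Lemma rmulBr (m : M) (s t : S) : rmul m (s - t) = rmul m s - rmul m t.
Proof. by apply: (addIr (rmul m t)); rewrite -(rmulDr hM) !subrK. Qed.

Variable x : S.

Lemma Tset0 : Tset rmul x 0.
Proof. by move=> a; rewrite rmul0r. Qed.

Lemma TsetD m n : Tset rmul x m -> Tset rmul x n -> Tset rmul x (m + n).
Proof. by move=> Tm Tn a; rewrite (rmulDl hM) Tm Tn addr0. Qed.

Lemma TsetZ (r : R) m : Tset rmul x m -> Tset rmul x (r *: m).
Proof. by move=> Tm a; rewrite (rmulZl hM) Tm scaler0. Qed.

Lemma TsetMl (s : S) m : Tset rmul x m -> Tset rmul x (lmul s m).
Proof. by move=> Tm a; rewrite (lrmulA hM) Tm lmulr0. Qed.

Lemma TsetMr (s : S) m : Tset rmul x m -> Tset rmul x (rmul m s).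
Proof.
move=> Tm a.
by rewrite -(rmulA hM) mulr_commBr rmulBr Tm (rmulA hM) Tm rmul0r subr0.
Qed.

End Bimodule.

Theorem lemma3p16 (R : comPzRingType) (S : algType R) (M : lmodType R)
    (lmul : S -> M -> M) (rmul : M -> S -> M)
    (hM : bimodule lmul rmul) (x : S) :
  subbimodule lmul rmul (Tset rmul x).
Proof.
split.
- exact: Tset0 hM x.
- exact: TsetD hM x.
- exact: TsetZ hM x.
- exact: TsetMl hM x.
- exact: TsetMr hM x.
Qed.
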